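(* Let $G$ be an $r$-regular graph on $n$ vertices, where $n$ is even, and let $A$ be an Abelian group of order $n$ having exactly one involution (element of order 2). If $G$ is $A$-distance antimagic, then $r$ is odd.
   Context: All groups are finite Abelian, written additively. Let $G$ be a finite simple graph with $n$ vertices and $A$ an Abelian group of order $n$. For a bijection $f: V(G)\to A$, the weight of a vertex $x$ is $w_f(x)=\sum_{y\in N(x)} f(y)$, computed in $A$, where $N(x)$ is the open neighbourhood of $x$. $f$ is an $A$-distance antimagic labelling if the weights of all vertices are pairwise distinct; $f$ is an $A$-distance magic labelling if all vertices have the same weight (the magic constant). $G$ is $A$-distance antimagic (resp. magic) if it admits such a labelling. *)

From HB Require Import structures.
From mathcomp Require Import all_boot all_order all_algebra.
Set Implicit Arguments. Unset Strict Implicit. Unset Printing Implicit Defensive.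
Import GRing.Theory.
Local Open Scope ring_scope.

Definition simple_graph (V : finType) (e : rel V) : Prop :=
  symmetric e /\ irreflexive e.

Definition nbhd (V : finType) (e : rel V) (x : V) : {set V} := [set y | e x y].

Definition regular (V : finType) (e : rel V) (r : nat) : Prop :=
  forall x : V, #|nbhd e x| = r.

Definition weight (V : finType) (A : zmodType) (e : rel V) (f : V -> A) (x : V) : A :=
  \sum_(y in nbhd e x) f y.

Definition distance_antimagic_labelling (V : finType) (A : finZmodType)
    (e : rel V) (f : V -> A) : Prop :=
  bijective f /\ injective (weight e f).

Definition distance_antimagic (V : finType) (A : finZmodType) (e : rel V) : Prop :=
  exists f : V -> A, distance_antimagic_labelling e f.

Definition involutions (A : finZmodType) : {set A} :=
  [set a : A | (a != 0) && (a + a == 0)].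

From HB Require Import structures.
From mathcomp Require Import all_boot all_order all_algebra.

(* Let f be an A-distance antimagic labelling of the r-regular
   graph G on n = |A| vertices.  Both f and the weight function w_f are
   bijections V -> A (w_f is injective between sets of equal size), so
     sum_x f x = sum_(a in A) a = sum_x w_f x.
   Double counting the pairs (x, y) with y ~ x gives sum_x w_f x = r * sum_y f y.
   In an abelian group the non-self-inverse elements cancel in pairs {a, -a},
   so sum_(a in A) a is the sum of the involutions, i.e. the unique involution t.
   Hence t = r t, and if r were even then r t = 0 would contradict t <> 0.
   The file first proves the two group-theoretic facts about sum_(a in A) a,
   then the double-counting identity for regular graphs, and finally the
   theorem. *)

Set Implicit Arguments.
Unset Strict Implicit.
Unset Printing Implicit Defensive.

Import GRing.Theory.
Local Open Scope ring_scope.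

(* Elements that are not their own inverse sum to zero: ordering A by
   enum_rank, each pair {a, -a} contributes a + (-a) = 0. *)
Lemma sum_non_involutive (A : finZmodType) :
  \sum_(a : A | a + a != 0) a = 0.
Proof.
pose rk := @enum_rank A.
rewrite (bigID (fun a : A => (rk a < rk (- a))%N)) /=.
set S := \sum_(a | _ && (rk a < rk (- a))%N) a.
suff -> : \sum_(a : A | (a + a != 0) && ~~ (rk a < rk (- a))%N) a = - S.
  by rewrite subrr.
rewrite (reindex_inj (@oppr_inj A)) /= sumrN; congr (- _).
apply: eq_bigl => a; rewrite opprK -opprD oppr_eq0.
have [a2_0 | a2_n0] //= := eqVneq (a + a) 0.
have rk_neq : (rk a : nat) != rk (- a).
  apply: contra_neq a2_n0 => /val_inj/enum_rank_inj {2}->; exact: subrr.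
by rewrite -leqNgt leq_eqVlt (negbTE rk_neq).
Qed.

Lemma sum_group_unique_involution (A : finZmodType) (t : A) :
  involutions A = [set t] -> \sum_(a : A) a = t.
Proof.
move=> invA.
rewrite (bigID (fun a : A => a + a == 0)) /= sum_non_involutive addr0.
rewrite (bigD1 0) /=; last by rewrite addr0.
rewrite add0r (eq_bigl (fun a => a \in involutions A)); last first.
  by move=> a; rewrite inE andbC.
by rewrite invA big_set1.
Qed.

(* Double counting: in an r-regular graph with symmetric adjacency, every
   label f y is counted once for each of the r neighbours of y. *)
Lemma sum_weight_regular (V : finType) (A : zmodType) (e : rel V) (r : nat)
    (f : V -> A) :
  symmetric e -> regular e r ->
  \sum_(x : V) weight e f x = (\sum_(y : V) f y) *+ r.
Proof.
move=> sym_e reg_e; rewrite /weight -sumrMnl.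
under eq_bigr => x _ do rewrite big_mkcond.
rewrite exchange_big /=; apply: eq_bigr => y _.
rewrite -big_mkcond /= (eq_bigl (fun x => x \in nbhd e y)); last first.
  by move=> x; rewrite !inE sym_e.
by rewrite sumr_const reg_e.
Qed.

Lemma sum_bijective (V A : finType) (B : zmodType) (g : A -> B) (f : V -> A) :
  bijective f -> \sum_(x : V) g (f x) = \sum_(a : A) g a.
Proof. by move=> bij_f; rewrite (reindex f) //; exact: onW_bij. Qed.

Lemma involution_muln_even (A : zmodType) (t : A) (r : nat) :
  t + t = 0 -> ~~ odd r -> t *+ r = 0.
Proof.
move=> tt_0 even_r.
by rewrite -(odd_double_half r) (negbTE even_r) add0n -mul2n mulrnA mulr2n tt_0 mul0rn.
Qed.

Theorem mainTheorem1 (V : finType) (e : rel V) (A : finZmodType) (r : nat) :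
  simple_graph e ->
  regular e r ->
  ~~ odd #|V| ->
  #|A| = #|V| ->
  #|involutions A| = 1%N ->
  distance_antimagic A e ->
  odd r.
Proof.
move=> [sym_e _] reg_e _ cardA one_inv [f [bij_f inj_w]].
have [t invA] := cards1P (introT eqP one_inv).
have bij_w : bijective (weight e f) by apply: inj_card_bij; rewrite ?cardA.
have sumA := sum_group_unique_involution invA.
have t_eq : t = t *+ r.
  rewrite -{1}sumA -(sum_bijective id bij_w) (sum_weight_regular f sym_e reg_e).
  by rewrite (sum_bijective id bij_f) sumA.
have : t \in involutions A by rewrite invA set11.
rewrite inE => /andP[t_n0 /eqP tt_0].
apply: contraLR t_n0 => even_r.
by rewrite negbK t_eq involution_muln_even.
Qed.
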